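(* Let $F$ be a field of characteristic $p>0$ which is algebraic over a finite field and has no field extension of degree $p$. Let $k=p^l$ for some integer $l\ge0$, let $u$ be a positive integer, let $c_1,\dots,c_u\in F$ be distinct, and set $$f_{k,u}(X,Y)=Y^{p^k}-Y+\frac{1}{\prod_{i=1}^u(X-c_i)}.$$ Then for every $a\in F\setminus\{c_1,\dots,c_u\}$ there exists $b\in F$ with $f_{k,u}(a,b)=0$. *)

From HB Require Import structures.
From mathcomp Require Import all_boot all_order all_algebra all_field.
Set Implicit Arguments. Unset Strict Implicit. Unset Printing Implicit Defensive.
Import GRing.Theory.
Local Open Scope ring_scope.

(* F is algebraic over its prime subfield (equivalently, over a finite field):
   every element is a root of a nonzero polynomial whose coefficients lie in
   the prime subfield {n%:R | n : nat}. *)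
Definition algebraic_over_prime_field (F : fieldType) : Prop :=
  forall x : F, exists q : {poly F},
    [/\ q != 0, forall i : nat, exists m : nat, q`_i = m%:R & root q x].

Definition no_field_ext_of_degree (F : fieldType) (d : nat) : Prop :=
  forall L : fieldExtType F, \dim (fullv : {vspace L}) <> d.

Definition f_ku (F : fieldType) (p k u : nat) (c : 'I_u -> F) (a b : F) : F :=
  b ^+ (p ^ k) - b + (\prod_(i < u) (a - c i))^-1.

From HB Require Import structures.
From mathcomp Require Import all_boot all_order all_algebra all_field.
From Stdlib Require Import Classical.
Set Implicit Arguments. Unset Strict Implicit. Unset Printing Implicit Defensive.
Import GRing.Theory.
Local Open Scope ring_scope.

(* Let F have characteristic p and no field extension of degree p.  We show
   that y |-> y^(p^k) - y is onto F for k = p^l; taking for b a preimage of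
   -1 / prod_i (a - c_i) then gives f_{k,u}(a, b) = 0.

   1. Artin-Schreier: if y^p - y = s had no solution in F, a monic
      irreducible factor q of X^p - X - s would generate an extension L of
      degree deg q containing a root z.  Over L this polynomial splits as
      prod_(i < p) (X - (z + i)), so either deg q = p, which is excluded, or
      0 < deg q < p and comparing the subleading coefficient of q with that
      of the product shows z in F, a contradiction.
   2. Iteration: for every additive map phi in characteristic p, iterating
      phi - id p times gives phi^p - id, since the middle binomial
      coefficients of (phi - id)^p vanish.  With phi = (y |-> y^(p^(p^l)))
      this writes y |-> y^(p^(p^(l+1))) - y as the p-fold iterate of
      y |-> y^(p^(p^l)) - y, so surjectivity follows by induction on l. *)

(* Signed binomial coefficients (-1)^(n+i) C(n,i): the coefficients of the
   expansion of (phi - id)^n in powers of phi. *)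
Definition alt_binomial (n i : nat) : int := (-1) ^+ (n + i) * ('C(n, i))%:Z.

Lemma alt_binomialS n i :
  alt_binomial n.+1 i.+1 = alt_binomial n i - alt_binomial n i.+1.
Proof.
rewrite /alt_binomial binS PoszD mulrDr !addnS !addSn !exprS.
by rewrite !mulN1r mulNr opprK addrC.
Qed.

Lemma alt_binomialS0 n : alt_binomial n.+1 0 = - alt_binomial n 0.
Proof. by rewrite /alt_binomial !addn0 !bin0 exprS mulN1r mulNr. Qed.

Lemma iter_sub_id (V : zmodType) (phi : {additive V -> V}) n y :
  iter n (fun x => phi x - x) y =
  \sum_(i < n.+1) iter i phi y *~ alt_binomial n i.
Proof.
elim: n => [|n IHn]; first by rewrite big_ord1 /alt_binomial /= mulr1z.
set a := fun i => iter i phi y.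
have split_first : \sum_(i < n.+1) a i *~ alt_binomial n i =
    a 0%N *~ alt_binomial n 0 + \sum_(i < n.+1) a i.+1 *~ alt_binomial n i.+1.
  rewrite big_ord_recl [X in _ = _ + X]big_ord_recr /=.
  by rewrite /alt_binomial (bin_small (ltnSn n)) mulr0 mulr0z addr0.
rewrite iterS IHn raddf_sum split_first [RHS]big_ord_recl alt_binomialS0 mulrNz.
under [in RHS]eq_bigr => i _ do rewrite alt_binomialS mulrzBr.
rewrite sumrB opprD addrCA addrA -addrA; congr (_ + (_ - _)).
by apply: eq_bigr => i _; rewrite raddfMz.
Qed.

Lemma pchar_nat_self (R : nzRingType) p : p \in [pchar R] -> [pchar R].-nat p.
Proof. by move=> hc; rewrite (eq_pnat _ (pcharf_eq hc)) pnat_id ?(pcharf_prime hc). Qed.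

(* In characteristic p, (phi - id)^p = phi^p - id: only the extreme binomial
   coefficients of the expansion survive. *)
Lemma iter_sub_id_pchar (R : nzRingType) p (hc : p \in [pchar R])
    (phi : {additive R -> R}) y :
  iter p (fun x => phi x - x) y = iter p phi y - y.
Proof.
have p_prime := pcharf_prime hc.
have max_neq0 : ord_max != ord0 :> 'I_p.+1 by rewrite -val_eqE /= -lt0n prime_gt0.
rewrite iter_sub_id (bigD1 ord0) // (bigD1 ord_max) //= big1 => [|i].
  rewrite addr0 addrC /alt_binomial binn bin0 !mulr1 addnn -mul2n exprM sqrrN.
  rewrite expr1n mulr1z addn0 -mulrzr rmorphXn rmorphN1 exprNn_pchar.
    by rewrite expr1n mulrN1.
  exact: pchar_nat_self.
rewrite -!val_eqE /= => /andP[i_neq0 i_neq_p].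
have p_dvd_bin : (p %| 'C(p, i))%N.
  by rewrite prime_dvd_bin // lt0n i_neq0 ltn_neqAle i_neq_p -ltnS ltn_ord.
rewrite /alt_binomial mulrzA -pmulrn -mulr_natr.
by move: p_dvd_bin; rewrite (dvdn_pcharf hc) => /eqP ->; rewrite mulr0.
Qed.

(* The power map x |-> x^q, for q a power of the characteristic, as an
   additive map (the proof of [pchar R].-nat q only serves to make it one). *)
Definition pchar_power (R : comNzRingType) (q : nat) of [pchar R].-nat q :=
  fun x : R => x ^+ q.

Section PcharPower.
Variables (R : comNzRingType) (q : nat) (hq : [pchar R].-nat q).

Lemma pchar_power_is_nmod_morphism : nmod_morphism (pchar_power hq).
Proof.
split=> [|x y]; last exact: exprDn_pchar.
by case/andP: hq => q_gt0 _; rewrite /pchar_power expr0n eqn0Ngt q_gt0.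
Qed.

HB.instance Definition _ :=
  GRing.isNmodMorphism.Build R R (pchar_power hq) pchar_power_is_nmod_morphism.

End PcharPower.

Lemma iter_exprn (R : pzSemiRingType) (q n : nat) (y : R) :
  iter n (fun x => x ^+ q) y = y ^+ (q ^ n).
Proof. by elim: n => [|n IHn]; rewrite ?expr1 // iterS IHn -exprM expnSr. Qed.

Lemma iter_pchar_power_sub (R : comNzRingType) p q (hc : p \in [pchar R])
    (hq : [pchar R].-nat q) (y : R) :
  iter p (fun x => x ^+ q - x) y = y ^+ (q ^ p) - y.
Proof. by rewrite (iter_sub_id_pchar hc (pchar_power hq)) iter_exprn. Qed.

Definition artin_schreier_poly (R : nzRingType) (p : nat) (t : R) : {poly R} :=
  'X^p - 'X - t%:P.

Section ArtinSchreierPoly.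
Variables (R : nzRingType) (p : nat) (p_gt1 : (1 < p)%N).

Lemma size_artin_schreier_poly (t : R) : size (artin_schreier_poly p t) = p.+1.
Proof.
rewrite /artin_schreier_poly -addrA -opprD size_polyDl ?size_polyXn //.
by rewrite size_polyN size_XaddC.
Qed.

Lemma artin_schreier_poly_monic (t : R) : artin_schreier_poly p t \is monic.
Proof.
rewrite /artin_schreier_poly -addrA -opprD monicE lead_coefDl ?lead_coefXn //.
by rewrite size_polyXn size_polyN size_XaddC.
Qed.

End ArtinSchreierPoly.

Lemma root_artin_schreier_poly (R : comNzRingType) p (t x : R) :
  root (artin_schreier_poly p t) x = (x ^+ p - x == t).
Proof. by rewrite /root /artin_schreier_poly !hornerE subr_eq0. Qed.

Lemma map_artin_schreier_poly (R S : nzRingType) (f : {rmorphism R -> S}) p t :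
  map_poly f (artin_schreier_poly p t) = artin_schreier_poly p (f t).
Proof. by rewrite /artin_schreier_poly !rmorphB /= map_polyXn map_polyX map_polyC. Qed.

Lemma natr_inj_pchar (R : nzRingType) p (hc : p \in [pchar R]) i j :
  (i < p)%N -> (j < p)%N -> i%:R = j%:R :> R -> i = j.
Proof.
wlog le_ij : i j / (i <= j)%N.
  by move=> W i_lt j_lt eq_ij; case: (leqP i j) => [|/ltnW] le; [|apply/esym]; apply: W.
move=> _ j_lt eq_ij; apply/eqP; rewrite eqn_leq le_ij /= -subn_eq0.
have : (p %| j - i)%N by rewrite (dvdn_pcharf hc) natrB // eq_ij subrr.
apply: contraLR; rewrite -lt0n => /dvdn_leq le_p; apply/negP => /le_p.
by rewrite leqNgt (leq_ltn_trans (leq_subr i j) j_lt).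
Qed.

Section ArtinSchreierRoots.
Variables (L : fieldType) (p : nat) (hc : p \in [pchar L]).

Lemma artin_schreier_shift (z t : L) i :
  z ^+ p - z = t -> (z + i%:R) ^+ p - (z + i%:R) = t.
Proof.
move=> <-; rewrite exprDn_pchar ?pchar_nat_self // -(pFrobenius_autE hc i%:R).
by rewrite rmorph_nat opprD addrACA subrr addr0.
Qed.

Lemma artin_schreier_split (z t : L) : z ^+ p - z = t ->
  artin_schreier_poly p t = \prod_(i <- iota 0 p) ('X - (z + i%:R)%:P).
Proof.
move=> root_z; have p_gt1 := prime_gt1 (pcharf_prime hc).
set rs := [seq z + i%:R | i <- iota 0 p].
have all_roots : all (root (artin_schreier_poly p t)) rs.
  apply/allP => _ /mapP[i _ ->].
  by rewrite root_artin_schreier_poly (artin_schreier_shift i root_z).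
have uniq_rs : uniq_roots rs.
  rewrite uniq_rootsE map_inj_in_uniq ?iota_uniq // => i j.
  rewrite !mem_iota !add0n => /andP[_ i_lt] /andP[_ j_lt] /addrI.
  exact: natr_inj_pchar hc i j i_lt j_lt.
have := uniq_roots_dvdp all_roots uniq_rs; rewrite big_map => dvd_prod.
apply/eqP; rewrite eq_sym -eqp_monic ?monic_prod_XsubC ?artin_schreier_poly_monic //.
by rewrite -dvdp_size_eqp // size_prod_XsubC size_iota size_artin_schreier_poly.
Qed.

End ArtinSchreierRoots.

(* A monic factor of X^p - X - s of degree strictly between 0 and p, in
   presence of a root z in an extension, forces a root in F: the factor is
   prod_(i in S) (X - (z + i)) and its subleading coefficient
   -(deg q * z + sum_(i in S) i) lies in F, with deg q invertible in F. *)
Lemma artin_schreier_small_factor (F L : fieldType) (f : {rmorphism F -> L})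
    p (hc : p \in [pchar F]) (s : F) (z : L) (q : {poly F}) :
  z ^+ p - z = f s -> q \is monic -> q %| artin_schreier_poly p s ->
  (1 < size q <= p)%N -> exists x : F, x ^+ p - x = s.
Proof.
move=> root_z q_monic q_dvd /andP[q_gt1 q_le_p].
have hcL : p \in [pchar L] := rmorph_pchar f hc.
have : map_poly f q %| \prod_(i <- iota 0 p) ('X - (z + i%:R)%:P).
  by rewrite -(artin_schreier_split hcL root_z) -map_artin_schreier_poly dvdp_map.
case/dvdp_prod_XsubC => m; set S := mask m (iota 0 p).
rewrite eqp_monic ?monic_map ?monic_prod_XsubC // => /eqP fq.
pose d := size S.
have size_q : size q = d.+1 by rewrite -(size_map_poly f) fq size_prod_XsubC.
have d_gt0 : (0 < d)%N by rewrite -ltnS -size_q.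
have d_neq0 : d%:R != 0 :> F.
  rewrite -(dvdn_pcharf hc); apply/negP => /(dvdn_leq d_gt0).
  by rewrite leqNgt -size_q q_le_p.
have coef_q : f q`_d.-1 = - (z *+ d + (\sum_(i <- S) i)%:R).
  have := @coefPn_prod_XsubC L [seq z + i%:R | i <- S].
  rewrite size_map -lt0n !big_map -fq coef_map => /(_ d_gt0) ->.
  by rewrite big_split /= big_const_seq count_predT iter_addr_0 natr_sum.
pose x := - (q`_d.-1 + (\sum_(i <- S) i)%:R) / d%:R.
have fx : f x = z.
  have fd_neq0 : f d%:R != 0 by rewrite fmorph_eq0.
  apply: (mulIf fd_neq0); rewrite -rmorphM divfK // !rmorph_nat mulr_natr.
  by rewrite rmorphN rmorphD coef_q rmorph_nat opprD opprK addrK.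
exists x; apply: (fmorph_inj f).
by rewrite rmorphB rmorphXn fx.
Qed.

Lemma eqp_irreducible (R : idomainType) (p q : {poly R}) :
  p %= q -> irreducible_poly p -> irreducible_poly q.
Proof.
move=> pq [p_gt1 p_irr]; split=> [|r r_neq1 r_dvd]; first by rewrite -(eqp_size pq).
by apply: (eqp_trans _ pq); apply: p_irr; rewrite // (eqp_dvdr _ pq).
Qed.

Lemma monic_irreducible_factor (F : fieldType) (P : {poly F}) :
  (1 < size P)%N -> exists q, [/\ irreducible_poly q, q \is monic & q %| P].
Proof.
have [n] := ubnP (size P); elim: n P => // n IHn P /ltnSE size_le P_gt1.
have P_neq0 : P != 0 by rewrite -size_poly_gt0 ltnW.
have [P_irr | P_red] := classic (irreducible_poly P).
  have lcP_neq0 : lead_coef P != 0 by rewrite lead_coef_eq0.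
  have qP : (lead_coef P)^-1 *: P %= P by rewrite eqp_scale ?invr_eq0.
  exists ((lead_coef P)^-1 *: P); split.
  - by apply: eqp_irreducible P_irr; rewrite eqp_sym.
  - by rewrite monicE lead_coefZ mulVf.
  - by rewrite (eqp_dvdl _ qP).
have [r [r_neq1 r_dvd r_neqP]] :
    exists r : {poly F}, [/\ size r != 1, r %| P & ~~ (r %= P)].
  apply: NNPP => no_r; apply: P_red; split=> // r r_neq1 r_dvd.
  by apply: contra_notT no_r => r_neqP; exists r.
have r_neq0 : r != 0.
  by apply: contra_neq P_neq0 => r0; move: r_dvd; rewrite r0 dvd0p => /eqP.
have r_lt : (size r < size P)%N.
  by rewrite ltn_neqAle dvdp_size_eqp // r_neqP dvdp_leq.
have r_gt1 : (1 < size r)%N by rewrite ltn_neqAle eq_sym r_neq1 size_poly_gt0.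
have [q [q_irr q_monic q_dvd]] := IHn r (leq_trans r_lt size_le) r_gt1.
by exists q; split=> //; apply: dvdp_trans q_dvd r_dvd.
Qed.

Lemma artin_schreier_surjective (F : fieldType) p (hc : p \in [pchar F])
    (hno : no_field_ext_of_degree F p) (s : F) :
  exists y : F, y ^+ p - y = s.
Proof.
apply: NNPP => no_root; have p_gt1 := prime_gt1 (pcharf_prime hc).
have P_gt1 : (1 < size (artin_schreier_poly p s))%N.
  by rewrite size_artin_schreier_poly // ltnS ltnW.
have [q [q_irr q_monic q_dvd]] := monic_irreducible_factor P_gt1.
have [L dimL [z qz _]] := irredp_FAdjoin q_irr.
have root_z : z ^+ p - z = in_alg L s.
  apply/eqP; rewrite -root_artin_schreier_poly -map_artin_schreier_poly.
  by apply: root_dvdp qz; rewrite dvdp_map.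
have size_q_le : (size q <= p.+1)%N.
  rewrite -(size_artin_schreier_poly p_gt1 s) dvdp_leq //.
  by rewrite monic_neq0 ?artin_schreier_poly_monic.
case: (ltnP p (size q)) => [p_lt | q_le_p].
  have size_q : size q = p.+1 by apply/eqP; rewrite eqn_leq size_q_le p_lt.
  by apply: (hno L); rewrite dimL size_q.
apply: no_root; apply: (artin_schreier_small_factor hc root_z q_monic q_dvd).
by rewrite q_irr.1.
Qed.

Lemma iter_surjective (T : Type) (f : T -> T) n :
  (forall s, exists y, f y = s) -> forall s, exists y, iter n f y = s.
Proof.
move=> f_onto; elim: n => [|n IHn] s; first by exists s.
by have [x <-] := f_onto s; have [y <-] := IHn x; exists y.
Qed.

(* y |-> y^(p^(p^l)) - y is onto, by induction on l: the step is the p-fold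
   iterate of the previous map. *)
Lemma pchar_power_sub_surjective (F : fieldType) p (hc : p \in [pchar F])
    (hno : no_field_ext_of_degree F p) l (s : F) :
  exists y : F, y ^+ (p ^ (p ^ l)) - y = s.
Proof.
elim: l s => [|l IHl] s; first by rewrite expn0 expn1; apply: artin_schreier_surjective.
have q_nat : [pchar F].-nat (p ^ (p ^ l))%N by rewrite pnatX pchar_nat_self.
have [y <-] := iter_surjective p IHl s.
by exists y; rewrite iter_pchar_power_sub // -expnM -expnSr.
Qed.

Theorem lemma3p1 (F : fieldType) (p : nat)
  (hp : prime p) (hchar : p \in [pchar F])
  (halg : algebraic_over_prime_field F)
  (hnoext : no_field_ext_of_degree F p)
  (l u : nat) (hu : (0 < u)%N) (c : 'I_u -> F) (hc : injective c) :
  let k := (p ^ l)%N in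
  forall a : F, (forall i : 'I_u, a != c i) ->
  exists b : F, f_ku p k c a b = 0.
Proof.
move=> k a _.
have [b fb] := pchar_power_sub_surjective hchar hnoext l (- (\prod_(i < u) (a - c i))^-1).
by exists b; rewrite /f_ku fb addNr.
Qed.
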